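(* Let $L$ be a frame. Then $$\mathsf R(L)=\mathrm{Int}(\mathsf{Cl}(L))=\mathcal B(\mathsf{Ex}(L))=\mathcal B(\mathsf{SE}(L))=\mathcal B(\mathsf{Filt}(L))$$ and $$\{\mathrm{fit}(S)\mid S\in\mathcal S_c(L)\}=\mathcal B(\{\mathrm{fit}(S)\mid S\in\mathcal S_b(L)\})=\mathcal B(\mathcal S_o(L)).$$
   Context: A frame is a complete lattice $L$ with $(\bigvee A)\wedge b=\bigvee_{a\in A}(a\wedge b)$, Heyting implication $\to$. For a coframe $C$ with top $1$ and co-Heyting difference $\setminus$ ($a\setminus b\le c$ iff $a\le b\vee c$), its Booleanization is $\mathcal B(C)=\{1\setminus c\mid c\in C\}$. Filters are nonempty up-closed subsets closed under finite meets; $\mathsf{Filt}(L)$ is ordered by reverse inclusion and is a coframe with joins = intersections, top $\{1\}$, and $H\setminus G=\{a\mid\forall b\in G,\ b\vee a\in H\}$. $\mathsf{Cl}(L)=\{\{x\mid x\vee a=1\}\mid a\in L\}$; $\mathsf R(L)=\{\{1\}\setminus G\mid G\in\mathsf{Filt}(L)\}$; $\mathrm{Int}(\mathcal F)$ = intersections of subfamilies (empty $=L$). $\mathfrak o(a)=\{a\to b\mid b\in L\}$. $\mathsf{Ex}(L)$: filters closed under exact meets ($(\bigwedge M)\vee b=\bigwedge_{a\in M}(a\vee b)$ for all $b$); $\mathsf{SE}(L)$: filters closed under strongly exact meets ($\bigcap_{a\in M}\mathfrak o(a)=\mathfrak o(\bigwedge M)$); both are coframes under reverse inclusion (subcolocales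 of $\mathsf{Filt}(L)$). Sublocales: subsets closed under all meets with $a\to s\in S$; they form the coframe $\mathsf{Sl}(L)$ under inclusion. $\mathrm{fit}(S)=\bigcap\{\mathfrak o(a)\mid S\subseteq\mathfrak o(a)\}$; $\mathcal S_o(L)$ is the coframe (under inclusion) of fitted sublocales (intersections of open sublocales), with joins $\mathrm{fit}$ of $\mathsf{Sl}(L)$-joins. $\mathcal S_c(L)$: joins of closed sublocales $\mathfrak c(a)={\uparrow}a$; $\mathcal S_b(L)$: joins of sublocales $\mathfrak c(x)\cap\mathfrak o(y)$. $\{\mathrm{fit}(S)\mid S\in\mathcal S_b(L)\}$ is a coframe under inclusion (a subcolocale of $\mathcal S_o(L)$). *)

(* frames as complete lattices given by a sup operator on
   predicates, satisfying the frame distributive law.  Subsets of L are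
   predicates [L -> Prop]; families of subsets are predicates on those. *)

Set Implicit Arguments.

Record Frame := {
  car :> Type;
  le : car -> car -> Prop;
  le_refl : forall x, le x x;
  le_trans : forall x y z, le x y -> le y z -> le x z;
  le_antisym : forall x y, le x y -> le y x -> x = y;
  sup : (car -> Prop) -> car;
  sup_ub : forall (A : car -> Prop) a, A a -> le a (sup A);
  sup_least : forall (A : car -> Prop) u, (forall a, A a -> le a u) -> le (sup A) u;
  (* frame law (distributivity), stated with the lattice operations derived
     from [sup] below (written out here) *)
  frame_distr : forall (A : car -> Prop) (b : car),
    sup (fun x => forall m, (m = sup A \/ m = b) -> le x m)
    = sup (fun y => exists a, A a /\
             y = sup (fun x => forall m, (m = a \/ m = b) -> le x m))
}.

Section FrameOps.
Variable L : Frame.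

Definition top : L := sup L (fun _ => True).
Definition join (a b : L) : L := sup L (fun x => x = a \/ x = b).
Definition inf (M : L -> Prop) : L := sup L (fun x => forall m, M m -> le L x m).
Definition meet (a b : L) : L := inf (fun m => m = a \/ m = b).
Definition imp (a b : L) : L := sup L (fun x => le L (meet x a) b).

Definition is_filter (F : L -> Prop) : Prop :=
  (exists x, F x) /\
  (forall x y, F x -> le L x y -> F y) /\
  (forall x y, F x -> F y -> F (meet x y)).

Definition opn (a : L) : L -> Prop := fun x => exists b, x = imp a b.
Definition cls (a : L) : L -> Prop := fun x => le L a x.

Definition exact_set (M : L -> Prop) : Prop :=
  forall b, join (inf M) b = inf (fun y => exists a, M a /\ y = join a b).
Definition strongly_exact_set (M : L -> Prop) : Prop :=
  forall x, (forall a, M a -> opn a x) <-> opn (inf M) x.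

Definition Filt : (L -> Prop) -> Prop := is_filter.
Definition Ex : (L -> Prop) -> Prop := fun F =>
  is_filter F /\ forall M, (forall a, M a -> F a) -> exact_set M -> F (inf M).
Definition SE : (L -> Prop) -> Prop := fun F =>
  is_filter F /\ forall M, (forall a, M a -> F a) -> strongly_exact_set M -> F (inf M).

Definition Cl : (L -> Prop) -> Prop := fun S =>
  exists a, S = (fun x => join x a = top).
(* R(L) = { {1} \ G | G filter },  {1} \ G = { a | forall b in G, b \/ a = 1 } *)
Definition Rfam : (L -> Prop) -> Prop := fun S =>
  exists G, is_filter G /\ S = (fun a => forall b, G b -> join b a = top).

Definition is_sublocale (S : L -> Prop) : Prop :=
  (forall M, (forall x, M x -> S x) -> S (inf M)) /\
  (forall a s, S s -> S (imp a s)).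

Definition sl_join (Fam : (L -> Prop) -> Prop) : L -> Prop := fun x =>
  forall T, is_sublocale T ->
    (forall S, Fam S -> forall y, S y -> T y) -> T x.

Definition fitted : (L -> Prop) -> Prop := fun S =>
  exists A : L -> Prop, S = (fun x => forall a, A a -> opn a x).

Definition fit (S : L -> Prop) : L -> Prop := fun x =>
  forall a, (forall y, S y -> opn a y) -> opn a x.

Definition Sc : (L -> Prop) -> Prop := fun S =>
  exists A : L -> Prop, S = sl_join (fun T => exists a, A a /\ T = cls a).
Definition Sb : (L -> Prop) -> Prop := fun S =>
  exists I : L -> L -> Prop,
    S = sl_join (fun T => exists x y, I x y /\ T = (fun z => cls x z /\ opn y z)).

Definition fit_image (Fam : (L -> Prop) -> Prop) : (L -> Prop) -> Prop :=
  fun T => exists S, Fam S /\ T = fit S.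

End FrameOps.

Definition Int {X : Type} (F : (X -> Prop) -> Prop) : (X -> Prop) -> Prop :=
  fun S => exists Fs : (X -> Prop) -> Prop,
    (forall T, Fs T -> F T) /\ S = (fun x => forall T, Fs T -> T x).

Definition incl {X : Type} (S T : X -> Prop) : Prop := forall x, S x -> T x.
Definition rev_incl {X : Type} (S T : X -> Prop) : Prop := forall x, T x -> S x.

(* Order-theoretic Booleanization of a coframe (C, le):
   B(C) = { 1 \ c | c in C }, where 1 is the top of C and
   a \ b is the least c in C with a <= b \/_C c (join taken in C). *)
Section Boolz.
Variables (X : Type) (le : X -> X -> Prop) (C : X -> Prop).

Definition is_top (t : X) : Prop := C t /\ forall y, C y -> le y t.
Definition is_join (a b j : X) : Prop :=
  C j /\ le a j /\ le b j /\ forall y, C y -> le a y -> le b y -> le j y.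
Definition is_diff (a b d : X) : Prop :=
  C d /\ (exists j, is_join b d j /\ le a j) /\
  forall c, C c -> (exists j, is_join b c j /\ le a j) -> le d c.
Definition Booleanization : X -> Prop := fun x =>
  exists t c, is_top t /\ C c /\ is_diff t c x.
End Boolz.

(* Everything is computed from  perp X = {a | b \/ a = 1 for all b in X},  which
   is {1} \ X in Filt(L).  In a family C of filters that contains every perp X
   and is closed under binary intersection, the top is {1}, binary joins are
   intersections, and the join of c and c' is the top exactly when c' is
   contained in perp c; hence 1 \ c = perp c and B(C) = {perp X}.  R(L) and
   Int(Cl(L)) are {perp X} directly, since perp X is the intersection of the
   closed sets {x | x \/ b = 1}, b in X.
   On the sublocale side the key fact is that c(x) is contained in o(a) iff
   x \/ a = 1.  In a family of fitted sublocales containing every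
   /\_{a in perp A} o(a) and closed under fitted binary joins, the join of
   /\_{a in A} o(a) with c' is all of L iff every open o(a) containing c' has
   a in perp A, so 1 \ /\_{a in A} o(a) = /\_{a in perp A} o(a); and the fitting
   of the join of the closed sublocales c(a), a in A, is that same set. *)

From Stdlib Require Import FunctionalExtensionality PropExtensionality.

Lemma pred_ext {X : Type} (P Q : X -> Prop) : (forall x, P x <-> Q x) -> P = Q.
Proof.
  intro H; apply functional_extensionality; intro x.
  apply propositional_extensionality, H.
Qed.

Section FrameTheory.
Variable L : Frame.
Notation le := (le L).
Notation top := (top L).
Notation join := (join L).
Notation meet := (meet L).
Notation inf := (inf L).
Notation imp := (imp L).
Notation opn := (opn L).
Notation cls := (cls L).
Notation fit := (fit L).
Notation sl_join := (sl_join L).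
Notation full := (fun _ : L => True).
Notation one := (fun x : L => x = top).

Definition bot : L := sup L (fun _ => False).

Lemma le_top x : le x top.
Proof. apply sup_ub; exact I. Qed.

Lemma top_le_eq x : le top x -> x = top.
Proof. intro; apply le_antisym; auto using le_top. Qed.

Lemma join_ubl a b : le a (join a b).
Proof. apply sup_ub; auto. Qed.

Lemma join_ubr a b : le b (join a b).
Proof. apply sup_ub; auto. Qed.

Lemma join_lub a b c : le a c -> le b c -> le (join a b) c.
Proof. intros; apply sup_least; intros x [-> | ->]; auto. Qed.

Lemma join_comm a b : join a b = join b a.
Proof. apply le_antisym; apply join_lub; auto using join_ubl, join_ubr. Qed.

Lemma join_idem a : join a a = a.
Proof. apply le_antisym; [apply join_lub; apply le_refl | apply join_ubl]. Qed.

Lemma join_bot_l a : join bot a = a.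
Proof.
  apply le_antisym; [| apply join_ubr].
  apply join_lub; [apply sup_least; intros ? [] | apply le_refl].
Qed.

Lemma inf_lb (M : L -> Prop) m : M m -> le (inf M) m.
Proof. intro; apply sup_least; intros x Hx; apply Hx; auto. Qed.

Lemma inf_glb (M : L -> Prop) u : (forall m, M m -> le u m) -> le u (inf M).
Proof. intro; apply sup_ub; auto. Qed.

Lemma inf_eq_top (M : L -> Prop) : (forall a, M a -> a = top) -> inf M = top.
Proof. intro H; apply top_le_eq, inf_glb; intros m Hm; rewrite (H m Hm); apply le_refl. Qed.

Lemma meet_lbl a b : le (meet a b) a.
Proof. apply inf_lb; auto. Qed.

Lemma meet_lbr a b : le (meet a b) b.
Proof. apply inf_lb; auto. Qed.

Lemma meet_glb a b c : le c a -> le c b -> le c (meet a b).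
Proof. intros; apply inf_glb; intros m [-> | ->]; auto. Qed.

Lemma meet_join_distr_le x y z : le (meet (join y z) x) (join (meet y x) (meet z x)).
Proof.
  rewrite (frame_distr L (fun w => w = y \/ w = z) x : meet (join y z) x = _).
  apply sup_least; intros w [a [[-> | ->] ->]]; [apply join_ubl | apply join_ubr].
Qed.

Lemma meet_imp_le a b : le (meet (imp a b) a) b.
Proof.
  rewrite (frame_distr L (fun y => le (meet y a) b) a : meet (imp a b) a = _).
  apply sup_least; intros y [c [Hc ->]]; exact Hc.
Qed.

Lemma le_imp x a b : le x (imp a b) <-> le (meet x a) b.
Proof.
  split; intro H.
  - eapply le_trans; [| apply meet_imp_le].
    apply meet_glb; [eapply le_trans; [apply meet_lbl | exact H] | apply meet_lbr].
  - apply sup_ub; exact H.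
Qed.

Lemma imp_mono_r a b b' : le b b' -> le (imp a b) (imp a b').
Proof. intro; apply le_imp; eapply le_trans; [apply meet_imp_le | assumption]. Qed.

Lemma imp_anti_l a a' b : le a a' -> le (imp a' b) (imp a b).
Proof.
  intro; apply le_imp; eapply le_trans; [| apply meet_imp_le].
  apply meet_glb; [apply meet_lbl | eapply le_trans; [apply meet_lbr | assumption]].
Qed.

Lemma imp_exchange a b c : le (imp a (imp b c)) (imp b (imp a c)).
Proof.
  apply le_imp, le_imp; eapply le_trans; [| apply (meet_imp_le b c)].
  apply meet_glb.
  - eapply le_trans; [| apply (meet_imp_le a (imp b c))].
    apply meet_glb; [eapply le_trans; apply meet_lbl | apply meet_lbr].
  - eapply le_trans; [apply meet_lbl | apply meet_lbr].
Qed.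

Lemma opn_iff a y : opn a y <-> le (imp a y) y.
Proof.
  split.
  - intros [b ->]; apply le_imp; eapply le_trans; [| apply (meet_imp_le a b)].
    apply meet_glb; [apply meet_imp_le | apply meet_lbr].
  - intro H; exists y; apply le_antisym; [apply le_imp, meet_lbl | exact H].
Qed.

Lemma opn_top y : opn top y.
Proof.
  apply opn_iff; eapply le_trans; [| apply meet_imp_le].
  apply meet_glb; [apply le_refl | apply le_top].
Qed.

Lemma opn_mono a a' y : le a a' -> opn a y -> opn a' y.
Proof.
  intros Ha Hy; apply opn_iff in Hy; apply opn_iff.
  eapply le_trans; [apply imp_anti_l, Ha | exact Hy].
Qed.

Lemma opn_above_eq_top a y : opn a y -> le a y -> y = top.
Proof.
  intros Hy Ha; apply opn_iff in Hy; apply top_le_eq.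
  eapply le_trans; [| exact Hy].
  apply le_imp; eapply le_trans; [apply meet_lbr | exact Ha].
Qed.

Lemma opn_self a : opn a a -> a = top.
Proof. intro H; exact (opn_above_eq_top _ _ H (le_refl L a)). Qed.

(* By distributivity, (w -> y) = (w -> y) /\ (z \/ w) <= z \/ (w /\ (w -> y)) <= y. *)
Lemma cls_sub_opn z w y : join z w = top -> le z y -> opn w y.
Proof.
  intros Hzw Hzy; apply opn_iff.
  apply le_trans with (meet (join z w) (imp w y)).
  - apply meet_glb; [rewrite Hzw; apply le_top | apply le_refl].
  - eapply le_trans; [apply meet_join_distr_le |]; apply join_lub.
    + eapply le_trans; [apply meet_lbl | exact Hzy].
    + eapply le_trans; [| apply (meet_imp_le w y)].
      apply meet_glb; [apply meet_lbr | apply meet_lbl].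
Qed.

Lemma incl_cls_opn x a : incl (cls x) (opn a) <-> join x a = top.
Proof.
  split.
  - intro H; apply (opn_above_eq_top a (join x a)); [apply H, join_ubl | apply join_ubr].
  - intros H y Hy; exact (cls_sub_opn _ _ _ H Hy).
Qed.

Lemma opn_sublocale a : is_sublocale L (opn a).
Proof.
  split.
  - intros M HM; apply opn_iff, inf_glb; intros m Hm.
    eapply le_trans; [apply imp_mono_r, inf_lb, Hm |].
    apply opn_iff, HM, Hm.
  - intros a' s Hs; apply opn_iff.
    eapply le_trans; [apply imp_exchange |].
    apply imp_mono_r, opn_iff, Hs.
Qed.

Definition perp (X : L -> Prop) : L -> Prop := fun a => forall b, X b -> join b a = top.

Lemma perp_anti (X Y : L -> Prop) : incl X Y -> incl (perp Y) (perp X).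
Proof. intros H a Ha b Hb; apply Ha, H, Hb. Qed.

Lemma sub_perp_perp (X : L -> Prop) : incl X (perp (perp X)).
Proof. intros x Hx b Hb; rewrite join_comm; apply Hb, Hx. Qed.

Lemma perp3 (X : L -> Prop) : perp (perp (perp X)) = perp X.
Proof.
  apply pred_ext; intro a; split.
  - apply perp_anti, sub_perp_perp.
  - apply sub_perp_perp.
Qed.

Lemma perp_full : perp full = one.
Proof.
  apply pred_ext; intro a; split.
  - intro Ha; rewrite <- (join_bot_l a); apply Ha; exact I.
  - intros -> b _; apply top_le_eq, join_ubr.
Qed.

Lemma join_eq_top_mono b a a' : join b a = top -> le a a' -> join b a' = top.
Proof.
  intros H Ha; apply top_le_eq; rewrite <- H.
  apply join_lub; [apply join_ubl | eapply le_trans; [exact Ha | apply join_ubr]].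
Qed.

Lemma join_meet_eq_top b a a' : join b a = top -> join b a' = top -> join b (meet a a') = top.
Proof.
  intros Ha Ha'; apply top_le_eq; rewrite <- Ha'.
  apply join_lub; [apply join_ubl |].
  apply le_trans with (meet (join b a) a').
  - apply meet_glb; [rewrite Ha; apply le_top | apply le_refl].
  - eapply le_trans; [apply meet_join_distr_le |]; apply join_lub.
    + eapply le_trans; [apply meet_lbl | apply join_ubl].
    + apply join_ubr.
Qed.

Lemma perp_filter X : is_filter L (perp X).
Proof.
  split; [| split].
  - exists top; intros b _; apply top_le_eq, join_ubr.
  - intros a a' Ha Hle b Hb; exact (join_eq_top_mono _ _ _ (Ha b Hb) Hle).
  - intros a a' Ha Ha' b Hb; exact (join_meet_eq_top _ _ _ (Ha b Hb) (Ha' b Hb)).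
Qed.

Lemma filter_top G : is_filter L G -> G top.
Proof. intros [[x Hx] [Hup _]]; exact (Hup x top Hx (le_top x)). Qed.

Lemma filter_inter G H : is_filter L G -> is_filter L H -> is_filter L (fun z => G z /\ H z).
Proof.
  intros HG HH; split; [exists top; split; apply filter_top; auto |].
  destruct HG as (_ & HGu & HGm), HH as (_ & HHu & HHm); split.
  - intros x y [] Hxy; split; eauto.
  - intros x y [] []; split; auto.
Qed.

Definition is_perp (S : L -> Prop) : Prop := exists X, S = perp X.

Lemma Rfam_is_perp : Rfam L = is_perp.
Proof.
  apply pred_ext; intro S; split.
  - intros [G [_ ->]]; exists G; reflexivity.
  - intros [X ->]; exists (perp (perp X)); split; [apply perp_filter |].
    symmetry; apply perp3.
Qed.

Lemma Int_Cl_is_perp : Int (Cl L) = is_perp.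
Proof.
  apply pred_ext; intro S; split.
  - intros [Fs [HFs ->]].
    exists (fun a => Fs (fun x => join x a = top)).
    apply pred_ext; intro x; split.
    + intros H b Hb; rewrite join_comm; exact (H _ Hb).
    + intros H T HT; destruct (HFs T HT) as [a ->].
      rewrite join_comm; apply H, HT.
  - intros [X ->]; exists (fun T => exists b, X b /\ T = (fun x => join x b = top)); split.
    + intros T [b [_ ->]]; exists b; reflexivity.
    + apply pred_ext; intro x; split.
      * intros H T [b [Xb ->]]; rewrite join_comm; auto.
      * intros H b Xb; rewrite join_comm; apply (H (fun x => join x b = top)); eauto.
Qed.

(** * Booleanization of coframes of filters *)

Section FilterCoframe.
Variable C : (L -> Prop) -> Prop.
Hypothesis C_filter : forall G, C G -> is_filter L G.
Hypothesis C_inter : forall G H, C G -> C H -> C (fun z => G z /\ H z).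
Hypothesis C_perp : forall X, C (perp X).

Lemma is_top_filters : is_top rev_incl C one.
Proof.
  split; [rewrite <- perp_full; apply C_perp |].
  intros G CG x ->; apply filter_top, C_filter, CG.
Qed.

Lemma is_top_filters_eq t : is_top rev_incl C t -> t = one.
Proof.
  intros [Ct Htop]; apply pred_ext; intro x; split.
  - intro Hx; pose proof (Htop _ (C_perp full) x Hx) as H; rewrite perp_full in H; exact H.
  - intros ->; apply filter_top, C_filter, Ct.
Qed.

Lemma join_eq_one_filters c c' : C c -> C c' ->
  (exists j, is_join rev_incl C c c' j /\ rev_incl one j) <-> incl c' (perp c).
Proof.
  intros Cc Cc'; split.
  - intros [j [[_ [_ [_ Hleast]]] Hj]] a Ha b Hb.
    destruct (C_filter _ Cc) as (_ & Hcu & _); destruct (C_filter _ Cc') as (_ & Hc'u & _).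
    apply Hj, (Hleast (fun z => c z /\ c' z)); [apply C_inter; auto | | | split].
    + intros x []; auto.
    + intros x []; auto.
    + exact (Hcu _ _ Hb (join_ubl b a)).
    + exact (Hc'u _ _ Ha (join_ubr b a)).
  - intro H; exists (fun z => c z /\ c' z); split; [split; [auto | split; [| split]] |].
    + intros x []; auto.
    + intros x []; auto.
    + intros y _ Hy Hy' x Hx; auto.
    + intros x [Hx Hx']; rewrite <- (join_idem x); apply H; auto.
Qed.

Lemma diff_one_filters c S : C c -> is_diff rev_incl C one c S <-> S = perp c.
Proof.
  intro Cc; split.
  - intros [CS [Hj Hleast]]; apply pred_ext; intro a; split.
    + apply (join_eq_one_filters _ _ Cc CS), Hj.
    + apply Hleast; [apply C_perp |].
      apply join_eq_one_filters; [exact Cc | apply C_perp | intros x Hx; exact Hx].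
  - intros ->; split; [apply C_perp | split].
    + apply join_eq_one_filters; [exact Cc | apply C_perp | intros x Hx; exact Hx].
    + intros c' Cc' Hj; exact (proj1 (join_eq_one_filters _ _ Cc Cc') Hj).
Qed.

Lemma Booleanization_filters : Booleanization rev_incl C = is_perp.
Proof.
  apply pred_ext; intro S; split.
  - intros (t & c & Ht & Cc & Hd).
    rewrite (is_top_filters_eq _ Ht), (diff_one_filters _ _ Cc) in Hd.
    exists c; exact Hd.
  - intros [X ->]; exists one, (perp (perp X)).
    split; [apply is_top_filters | split; [apply C_perp |]].
    apply diff_one_filters; [apply C_perp | symmetry; apply perp3].
Qed.
End FilterCoframe.

Lemma Booleanization_Filt : Booleanization rev_incl (Filt L) = is_perp.
Proof.
  apply Booleanization_filters; [auto | intros; apply filter_inter; auto | apply perp_filter].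
Qed.

Lemma Booleanization_Ex : Booleanization rev_incl (Ex L) = is_perp.
Proof.
  apply Booleanization_filters.
  - intros G [HG _]; exact HG.
  - intros G H [FG HG] [FH HH]; split; [apply filter_inter; auto |].
    intros M HM Hex; split; [apply HG | apply HH]; auto; intros a Ma; apply HM, Ma.
  - intro X; split; [apply perp_filter |].
    intros M HM Hex b Xb; rewrite join_comm, (Hex b); apply inf_eq_top.
    intros y [a [Ma ->]]; rewrite join_comm; apply HM; auto.
Qed.

Lemma Booleanization_SE : Booleanization rev_incl (SE L) = is_perp.
Proof.
  apply Booleanization_filters.
  - intros G [HG _]; exact HG.
  - intros G H [FG HG] [FH HH]; split; [apply filter_inter; auto |].
    intros M HM Hse; split; [apply HG | apply HH]; auto; intros a Ma; apply HM, Ma.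
  - intro X; split; [apply perp_filter |].
    intros M HM Hse b Xb; apply (opn_above_eq_top (inf M)); [| apply join_ubr].
    apply (proj1 (Hse _)); intros a Ma; apply (cls_sub_opn b); [apply HM; auto | apply join_ubl].
Qed.

(** * Booleanization of coframes of fitted sublocales *)

Definition bigcap_opn (A : L -> Prop) : L -> Prop := fun x => forall a, A a -> opn a x.

Definition is_bigcap_opn_perp (S : L -> Prop) : Prop := exists A, S = bigcap_opn (perp A).

Lemma fitted_bigcap_opn A : fitted L (bigcap_opn A).
Proof. exists A; reflexivity. Qed.

Lemma fitted_fit X : fitted L (fit X).
Proof. exact (fitted_bigcap_opn (fun a => incl X (opn a))). Qed.

Lemma bigcap_opn_one : bigcap_opn one = full.
Proof. apply pred_ext; intro y; split; [auto | intros _ a ->; apply opn_top]. Qed.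

Lemma incl_fit_opn X a : incl (fit X) (opn a) <-> incl X (opn a).
Proof.
  split; intros H y Hy.
  - apply H; intros b Hb; apply Hb, Hy.
  - apply Hy, H.
Qed.

Lemma fit_least X y : fitted L y -> incl X y -> incl (fit X) y.
Proof. intros [B ->] H z Hz b Bb; apply Hz; intros w Xw; apply H; auto. Qed.

Lemma fit_eq_bigcap_opn X A : (forall a, incl X (opn a) <-> A a) -> fit X = bigcap_opn A.
Proof.
  intro H; apply pred_ext; intro z; split; intros Hz a Ha; apply Hz, H; exact Ha.
Qed.

Lemma incl_sl_join_opn (Fam : (L -> Prop) -> Prop) a :
  incl (sl_join Fam) (opn a) <-> forall T, Fam T -> incl T (opn a).
Proof.
  split.
  - intros H T FT y Ty; apply H; intros T' _ HT'; exact (HT' T FT y Ty).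
  - intros H y Hy; apply Hy; [apply opn_sublocale | exact H].
Qed.

Lemma incl_bigcap_opn_perp A a : incl (bigcap_opn (perp A)) (opn a) <-> perp A a.
Proof.
  split.
  - intros H z Az; apply (opn_above_eq_top a); [| apply join_ubr].
    apply H; intros w Dw; apply (cls_sub_opn z); [apply Dw, Az | apply join_ubl].
  - intros Ha y Hy; apply Hy, Ha.
Qed.

Lemma bigcap_opn_perp_least A x : fitted L x ->
  (forall a, incl x (opn a) -> perp A a) -> incl (bigcap_opn (perp A)) x.
Proof.
  intros [B ->] H z Hz b Bb; apply Hz, H.
  intros y Hy; apply Hy, Bb.
Qed.

Lemma union_bigcap_opn_top_iff A x :
  (forall a, incl (fun y => bigcap_opn A y \/ x y) (opn a) -> a = top) <->
  (forall a, incl x (opn a) -> perp A a).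
Proof.
  split.
  - intros H a Ha z Az; apply H; intros y [Hy | Hy].
    + apply (opn_mono z); [apply join_ubl | apply Hy, Az].
    + apply (opn_mono a); [apply join_ubr | apply Ha, Hy].
  - intros H a Ha; apply opn_self, Ha; left.
    intros z Az; apply (cls_sub_opn a); [| apply le_refl].
    rewrite join_comm; apply (H a); [intros y Hy; apply Ha; right; exact Hy | exact Az].
Qed.

Definition closed_family (A : L -> Prop) : (L -> Prop) -> Prop :=
  fun T => exists a, A a /\ T = cls a.

Definition locally_closed_family (I : L -> L -> Prop) : (L -> Prop) -> Prop :=
  fun T => exists x y, I x y /\ T = (fun z => cls x z /\ opn y z).

Lemma fit_sl_join_closed A : fit (sl_join (closed_family A)) = bigcap_opn (perp A).
Proof.
  apply fit_eq_bigcap_opn; intro a; rewrite incl_sl_join_opn; split.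
  - intros H x Ax; apply incl_cls_opn, H; exists x; auto.
  - intros H T [x [Ax ->]]; apply incl_cls_opn, H, Ax.
Qed.

Lemma closed_family_locally_closed A :
  closed_family A = locally_closed_family (fun x y => A x /\ y = top).
Proof.
  apply pred_ext; intro T; split.
  - intros [x [Ax ->]]; exists x, top; split; [auto |].
    apply pred_ext; intro z; split; [split; [auto | apply opn_top] | tauto].
  - intros (x & y & [Ax ->] & ->); exists x; split; [exact Ax |].
    apply pred_ext; intro z; split; [tauto | split; [auto | apply opn_top]].
Qed.

Lemma locally_closed_family_or (I1 I2 : L -> L -> Prop) :
  locally_closed_family (fun x y => I1 x y \/ I2 x y) =
  (fun T => locally_closed_family I1 T \/ locally_closed_family I2 T).
Proof.
  apply pred_ext; intro T; split.
  - intros (x & y & [Hi | Hi] & ->); [left | right]; exists x, y; auto.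
  - intros [(x & y & Hi & ->) | (x & y & Hi & ->)]; exists x, y; auto.
Qed.

Lemma fit_union_fit_sl_join (F G : (L -> Prop) -> Prop) :
  fit (fun z => fit (sl_join F) z \/ fit (sl_join G) z) = fit (sl_join (fun T => F T \/ G T)).
Proof.
  apply (fit_eq_bigcap_opn _ (fun a => incl (sl_join (fun T => F T \/ G T)) (opn a))).
  intro a; rewrite incl_sl_join_opn; split.
  - intros H T [FT | GT]; [revert T FT | revert T GT]; apply incl_sl_join_opn, incl_fit_opn;
      intros y Hy; apply H; [left | right]; exact Hy.
  - intros H y [Hy | Hy]; apply Hy, incl_sl_join_opn; intros T HT; apply H; auto.
Qed.

Section FittedCoframe.
Variable C : (L -> Prop) -> Prop.
Hypothesis C_fitted : forall S, C S -> fitted L S.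
Hypothesis C_fit_union : forall S T, C S -> C T -> C (fit (fun z => S z \/ T z)).
Hypothesis C_perp : forall A, C (bigcap_opn (perp A)).

Lemma is_top_fitted : is_top incl C full.
Proof.
  split; [| intros y _ z _; exact I].
  rewrite <- bigcap_opn_one, <- perp_full; apply C_perp.
Qed.

Lemma is_top_fitted_eq t : is_top incl C t -> t = full.
Proof.
  intros [_ Htop]; apply pred_ext; intro z; split; [auto |].
  intros _; apply (Htop _ (proj1 is_top_fitted)); exact I.
Qed.

(* The join of c and c' in C is the fitting of c \/ c', which is all of L iff
   the only open sublocale containing both is L = o(1). *)
Lemma join_eq_full_fitted c c' : C c -> C c' ->
  (exists j, is_join incl C c c' j /\ incl full j) <->
  (forall a, incl (fun y => c y \/ c' y) (opn a) -> a = top).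
Proof.
  intros Cc Cc'; split.
  - intros [j [[_ [cj [c'j Hleast]]] Hj]] a Ha; apply opn_self.
    apply (Hleast (fit (fun z => c z \/ c' z)));
      [apply C_fit_union; auto | intros x Hx y Hy; apply Hy; auto
      | intros x Hx y Hy; apply Hy; auto | apply Hj; exact I | exact Ha].
  - intro H; exists (fit (fun z => c z \/ c' z)); split.
    + split; [apply C_fit_union; auto | split; [| split]].
      * intros x Hx y Hy; apply Hy; auto.
      * intros x Hx y Hy; apply Hy; auto.
      * intros y Cy Hcy Hc'y; apply fit_least; [apply C_fitted, Cy |].
        intros w [Hw | Hw]; auto.
    + intros z _ a Ha; rewrite (H a Ha); apply opn_top.
Qed.

Lemma join_bigcap_opn_full_iff A c' : C (bigcap_opn A) -> C c' ->
  (exists j, is_join incl C (bigcap_opn A) c' j /\ incl full j) <->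
  (forall a, incl c' (opn a) -> perp A a).
Proof.
  intros CA Cc'; split; intro H.
  - apply union_bigcap_opn_top_iff, (join_eq_full_fitted _ _ CA Cc'), H.
  - apply (join_eq_full_fitted _ _ CA Cc'), union_bigcap_opn_top_iff, H.
Qed.

Lemma diff_full_fitted A S : C (bigcap_opn A) ->
  is_diff incl C full (bigcap_opn A) S <-> S = bigcap_opn (perp A).
Proof.
  intro CA; split.
  - intros [CS [Hj Hleast]]; apply pred_ext; intro z; split.
    + apply Hleast; [apply C_perp |].
      apply join_bigcap_opn_full_iff; [exact CA | apply C_perp |].
      intro a; apply incl_bigcap_opn_perp.
    + apply bigcap_opn_perp_least; [apply C_fitted, CS |].
      apply (join_bigcap_opn_full_iff _ _ CA CS), Hj.
  - intros ->; split; [apply C_perp | split].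
    + apply join_bigcap_opn_full_iff; [exact CA | apply C_perp |].
      intro a; apply incl_bigcap_opn_perp.
    + intros c' Cc' Hj; apply bigcap_opn_perp_least; [apply C_fitted, Cc' |].
      apply (join_bigcap_opn_full_iff _ _ CA Cc'), Hj.
Qed.

Lemma Booleanization_fitted_family : Booleanization incl C = is_bigcap_opn_perp.
Proof.
  apply pred_ext; intro S; split.
  - intros (t & c & Ht & Cc & Hd).
    rewrite (is_top_fitted_eq _ Ht) in Hd.
    destruct (C_fitted _ Cc) as [A ->].
    exists A; exact (proj1 (diff_full_fitted _ _ Cc) Hd).
  - intros [A ->]; exists full, (bigcap_opn (perp (perp A))).
    split; [apply is_top_fitted | split; [apply C_perp |]].
    apply diff_full_fitted; [apply C_perp | rewrite perp3; reflexivity].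
Qed.
End FittedCoframe.

Lemma Booleanization_fitted : Booleanization incl (fitted L) = is_bigcap_opn_perp.
Proof.
  apply Booleanization_fitted_family; auto using fitted_fit, fitted_bigcap_opn.
Qed.

Lemma fit_image_Sc : fit_image L (Sc L) = is_bigcap_opn_perp.
Proof.
  apply pred_ext; intro T; split.
  - intros [S [[A ->] ->]]; exists A; apply fit_sl_join_closed.
  - intros [A ->]; exists (sl_join (closed_family A)); split.
    + exists A; reflexivity.
    + symmetry; apply fit_sl_join_closed.
Qed.

Lemma Booleanization_fit_image_Sb :
  Booleanization incl (fit_image L (Sb L)) = is_bigcap_opn_perp.
Proof.
  apply Booleanization_fitted_family.
  - intros S [S' [_ ->]]; apply fitted_fit.
  - intros S T [S1 [[I1 ->] ->]] [S2 [[I2 ->] ->]].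
    exists (sl_join (locally_closed_family (fun x y => I1 x y \/ I2 x y))); split.
    + exists (fun x y => I1 x y \/ I2 x y); reflexivity.
    + rewrite locally_closed_family_or; apply fit_union_fit_sl_join.
  - intro A; exists (sl_join (closed_family A)); split.
    + rewrite closed_family_locally_closed; eexists; reflexivity.
    + symmetry; apply fit_sl_join_closed.
Qed.

End FrameTheory.

Theorem mainTheorem17 (L : Frame) :
  (Rfam L = Int (Cl L) /\
   Int (Cl L) = Booleanization rev_incl (Ex L) /\
   Booleanization rev_incl (Ex L) = Booleanization rev_incl (SE L) /\
   Booleanization rev_incl (SE L) = Booleanization rev_incl (Filt L)) /\
  (fit_image L (Sc L) = Booleanization incl (fit_image L (Sb L)) /\
   Booleanization incl (fit_image L (Sb L)) = Booleanization incl (fitted L)).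
Proof.
  rewrite Rfam_is_perp, Int_Cl_is_perp, Booleanization_Ex, Booleanization_SE,
    Booleanization_Filt, fit_image_Sc, Booleanization_fit_image_Sb, Booleanization_fitted.
  repeat split.
Qed.
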